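(* Let $\Omega\subset\mathbb{R}^3$ be a domain with boundary $\partial\Omega$ and outward unit normal $\mathbf{n}$, and consider a non-reactive fluid with density $\rho>0$ and temperature $T>0$, heat flux $\mathbf{q}=-K\nabla T$ and entropy flux by heat conduction $\mathbf{q}_s=-\frac{K}{T}\nabla T$, where $K$ is a nonnegative matrix (thermal conductivity). Let $S_T=K/T\geq 0$, let $\mathcal{G}_T e=-\nabla(e/\rho)$ on scalar fields and $\mathcal{G}_T^{*}\mathbf{w}=\frac{1}{\rho}\mathrm{div}\,\mathbf{w}$ on vector fields (the formal adjoint of $\mathcal{G}_T$), let $\mathcal{Q}_T e=\frac{1}{\rho T}\left\|\nabla\frac{e}{\rho}\right\|^2_{S_T}$ (so that $\mathcal{Q}_T e\geq 0$ for all $e$), and define $$\mathcal{J}_{\mathbf{q}}=\mathcal{Q}_T-\mathcal{G}_T^{*}S_T\mathcal{G}_T .$$ Then, with the entropy effort $e_s=\rho T$, the rate of entropy addition by heat flux satisfies $$-\frac{1}{\rho T}\,\mathrm{div}\,\mathbf{q}=\mathcal{J}_{\mathbf{q}}e_s,$$ and $$\int_\Omega e_s\,\mathcal{J}_{\mathbf{q}}e_s=-\int_{\partial\Omega}T\,(\mathbf{q}_s\cdot\mathbf{n}).$$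
   Context: For a vector $\mathbf{v}$ and matrix $X$, $\|\mathbf{v}\|^2_X=\mathbf{v}^{\mathsf T}X^{\mathsf T}\mathbf{v}$. $\mathcal{Q}_T$ is a (nonlinear) operator on scalar fields. Integrals over $\Omega$ and $\partial\Omega$ are with respect to volume and surface measure. *)

From HB Require Import structures.
From mathcomp Require Import all_boot all_order all_algebra.
From mathcomp Require Import all_classical all_reals all_analysis.
Set Implicit Arguments. Unset Strict Implicit. Unset Printing Implicit Defensive.
Import Order.TTheory GRing.Theory Num.Theory.
Import numFieldNormedType.Exports.
Local Open Scope classical_set_scope.
Local Open Scope ring_scope.

Section Defs.
Variable R : realType.

Notation V3 := 'rV[R]_3.

Definition ee (i : 'I_3) : V3 := delta_mx 0 i.

Definition partial (i : 'I_3) (f : V3 -> R) (x : V3) : R := 'D_(ee i) f x.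

Definition grad (f : V3 -> R) (x : V3) : V3 := \row_i partial i f x.

Definition div (w : V3 -> V3) (x : V3) : R :=
  \sum_(i < 3) partial i (fun y => w y 0 i) x.

(** matrix acting on a vector: M v (column convention), written for rows *)
Definition mapply (M : 'M[R]_3) (v : V3) : V3 := v *m M^T.

Definition dot (u v : V3) : R := (u *m v^T) 0 0.

Definition sqnormX (v : V3) (X : 'M[R]_3) : R := (v *m X^T *m v^T) 0 0.

(** nonnegative (positive semidefinite) matrix *)
Definition psd (M : 'M[R]_3) : Prop := forall v : V3, 0 <= (v *m M *m v^T) 0 0.

Definition S_T (T : V3 -> R) (K : V3 -> 'M[R]_3) (x : V3) : 'M[R]_3 :=
  (T x)^-1 *: K x.
Definition G_T (rho : V3 -> R) (e : V3 -> R) (x : V3) : V3 :=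
  - grad (fun y => e y / rho y) x.
Definition G_T_adj (rho : V3 -> R) (w : V3 -> V3) (x : V3) : R :=
  (rho x)^-1 * div w x.
Definition Q_T (rho T : V3 -> R) (K : V3 -> 'M[R]_3) (e : V3 -> R) (x : V3) : R :=
  (rho x * T x)^-1 * sqnormX (grad (fun y => e y / rho y) x) (S_T T K x).
Definition J_q (rho T : V3 -> R) (K : V3 -> 'M[R]_3) (e : V3 -> R) (x : V3) : R :=
  Q_T rho T K e x
  - G_T_adj rho (fun y => mapply (S_T T K y) (G_T rho e y)) x.

Definition heat_flux (T : V3 -> R) (K : V3 -> 'M[R]_3) (x : V3) : V3 :=
  - mapply (K x) (grad T x).
Definition entropy_flux (T : V3 -> R) (K : V3 -> 'M[R]_3) (x : V3) : V3 :=
  - mapply ((T x)^-1 *: K x) (grad T x).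

Definition C1_on (U : set V3) (f : V3 -> R) : Prop :=
  open U /\ (forall x, U x -> differentiable f x) /\
  (forall i, {within U, continuous (partial i f)}).

Definition C1_near_closure (Om : set V3) (w : V3 -> V3) : Prop :=
  exists U, [/\ open U, closure Om `<=` U & forall i, C1_on U (fun y => w y 0 i)].

Definition to3 (p : (R * R * R)%type) : V3 :=
  \row_(i < 3) (if i == 0 :> nat then p.1.1 else if i == 1 :> nat then p.1.2 else p.2).

Definition vol3 := (((@lebesgue_measure R) \x (@lebesgue_measure R)) \x (@lebesgue_measure R))%E.

Definition vol_int (Om : set V3) (f : V3 -> R) : \bar R :=
  (\int[vol3]_(p in to3 @^-1` Om) (f (to3 p))%:E)%E.

Definition bdry (Om : set V3) : set V3 := closure Om `\` interior Om.

(** sigma is the surface measure of the boundary of Omega and nu its outward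
    unit normal: sigma is finite and carried by the boundary, nu is a unit
    vector on the boundary, and the Gauss--Green (divergence) theorem holds
    for C^1 vector fields on a neighbourhood of the closure of Omega. *)
Definition surface_data (Om : set V3) (sigma : {measure set (R * R * R)%type -> \bar R})
    (nu : V3 -> V3) : Prop :=
  [/\ (sigma setT < +oo)%E,
      sigma (~` (to3 @^-1` bdry Om)) = 0%E,
      (forall x, bdry Om x -> dot (nu x) (nu x) = 1) &
      (forall w, C1_near_closure Om w ->
         vol_int Om (div w) =
         (\int[sigma]_(p in to3 @^-1` bdry Om) (dot (w (to3 p)) (nu (to3 p)))%:E)%E)].

End Defs.

Arguments to3 {R}.
Arguments vol_int {R}.
Arguments bdry {R}.
Arguments surface_data {R}.
Arguments partial {R}.
Arguments heat_flux {R}.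
Arguments entropy_flux {R}.
Arguments J_q {R}.
Arguments dot {R}.
Arguments div {R}.
Arguments psd {R}.
Arguments C1_on {R}.

(* With w := K grad T = -q, the choice e_s = rho T makes e_s / rho = T, so G_T e_s = -grad T and
   S_T G_T e_s = q / T.  The product rule div (q / T) = div q / T - grad T . q / T^2 makes the
   quadratic term Q_T e_s cancel, leaving J_q e_s = -div q / (rho T).  Hence e_s J_q e_s = div w,
   and the Gauss-Green theorem turns its volume integral into the boundary flux of w = -T q_s. *)

From HB Require Import structures.
From mathcomp Require Import all_boot all_order all_algebra.
From mathcomp Require Import all_classical all_reals all_analysis.
From mathcomp Require Import ring lra.
Set Implicit Arguments. Unset Strict Implicit. Unset Printing Implicit Defensive.
Import Order.TTheory GRing.Theory Num.Theory.
Import numFieldNormedType.Exports.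
Local Open Scope classical_set_scope.
Local Open Scope ring_scope.

Section bounds.
Variable R : realType.

Lemma within_continuous_sum (X : topologicalType) (A : set X) n (h : 'I_n -> X -> R) :
  (forall k, {within A, continuous (h k)}) -> {within A, continuous (\sum_(k < n) h k)}.
Proof.
move=> ch; elim/big_ind: _ => [|f g cf cg|k _]; last exact: ch.
  exact: cst_continuous.
exact: within_continuousD.
Qed.

Lemma bounded_set_closure (V : normedModType R) (A : set V) :
  bounded_set A -> bounded_set (closure A).
Proof.
move=> [M0 [M0r AM]]; exists M0; split=> // M M0M x clAx.
have A_ball : A `<=` closed_ball_ Num.norm (0 : V) M.
  by move=> y Ay; rewrite /closed_ball_ /= sub0r normrN; apply: AM.
have := closureS A_ball clAx.
by rewrite -(closure_id _).1; [rewrite /closed_ball_ /= sub0r normrN | exact: closed_closed_ball_].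
Qed.

Lemma compact_bounded_components (X : topologicalType) (A : set X) n
    (w : X -> 'rV[R]_n) :
  compact A -> (forall i, {within A, continuous (fun y => w y 0 i)}) ->
  exists M, forall y, A y -> \sum_(i < n) `|w y 0 i| <= M.
Proof.
move=> cA cw.
have csum : {within A, continuous (fun y => \sum_(i < n) `|w y 0 i|)}.
  rewrite -fct_sumE; apply: within_continuous_sum => i y.
  exact: (continuous_comp (cw i y) (@norm_continuous _ _ _)).
have [M [_ AM]] := compact_bounded (continuous_compact csum cA).
exists (M + 1) => y Ay.
have /AM /(_ _ (ex_intro2 _ _ y Ay erefl)) : M < M + 1 by rewrite ltrDl.
by rewrite /= ger0_norm // sumr_ge0.
Qed.

Local Open Scope ereal_scope.

Lemma integral_oppr_bounded d (X : measurableType d) (mu : {measure set X -> \bar R})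
    (D : set X) (f : X -> R) (M : R) :
  mu setT < +oo -> (forall p, D p -> (`|f p| <= M)%R) ->
  \int[mu]_(p in D) (- f p)%:E = - \int[mu]_(p in D) (f p)%:E.
Proof.
move=> mu_fin fM; under eq_integral do rewrite EFinN.
apply: integralN; apply: fin_num_adde_defl; rewrite fin_numN.
set g := fun p => (f p)%:E.
rewrite ge0_fin_numE; last exact: integral_ge0 (fun p _ => funeneg_ge0 g p).
have Mge0 : forall p : X, 0 <= cst `|M|%:E p by move=> p; rewrite /= lee_fin.
(* The integrand need not be measurable, so compare the suprema of simple functions. *)
have gM : \int[mu]_(p in D) g^\- p <= \int[mu]_(p in setT) cst `|M|%:E p.
  rewrite ge0_integralE; last by move=> p _; apply: funeneg_ge0.
  rewrite ge0_integralTE //; apply: ereal_sup_le => _ [h hg <-]; exists h => //= p.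
  apply: le_trans (hg p) _; rewrite /patch; case: ifP => [|_]; last by rewrite lee_fin.
  rewrite inE => Dp; rewrite funenegE /g ge_max !lee_fin normr_ge0 andbT.
  by rewrite (le_trans (ler_norm (- f p))) // normrN (le_trans (fM _ Dp)) // ler_norm.
apply: le_lt_trans gM _; rewrite integral_cst //.
by apply: lte_mul_pinfty; rewrite ?lee_fin.
Qed.

End bounds.

Section vector_calculus.
Variable R : realType.
Notation V3 := 'rV[R]_3.

Lemma dot_sum (u v : V3) : dot u v = \sum_(i < 3) u 0 i * v 0 i.
Proof. by rewrite /dot !mxE; apply: eq_bigr => k _; rewrite !mxE. Qed.

Lemma dotC (u v : V3) : dot u v = dot v u.
Proof. by rewrite !dot_sum; apply: eq_bigr => i _; rewrite mulrC. Qed.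

Lemma dotZl (a : R) (u v : V3) : dot (a *: u) v = a * dot u v.
Proof. by rewrite /dot -scalemxAl mxE. Qed.

Lemma dotNl (u v : V3) : dot (- u) v = - dot u v.
Proof. by rewrite /dot mulNmx mxE. Qed.

Lemma mapplyZ (a : R) M (v : V3) : mapply (a *: M) v = a *: mapply M v.
Proof. by rewrite /mapply linearZ /= -scalemxAr. Qed.

Lemma mapplyN M (v : V3) : mapply M (- v) = - mapply M v.
Proof. by rewrite /mapply mulNmx. Qed.

Lemma sqnormXZ (a : R) M (v : V3) : sqnormX v (a *: M) = a * dot (mapply M v) v.
Proof. by rewrite /sqnormX /dot linearZ /= -scalemxAr -scalemxAl mxE. Qed.

Lemma abs_dot_unit_le (u v : V3) :
  dot v v = 1 -> `|dot u v| <= \sum_(i < 3) `|u 0 i|.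
Proof.
move=> v1; rewrite dot_sum; apply: le_trans (ler_norm_sum _ _ _) _.
apply: ler_sum => i _; rewrite normrM -[leRHS]mulr1 ler_wpM2l //.
have vi_sq_le1 : v 0 i ^+ 2 <= 1.
  rewrite -v1 dot_sum (bigD1 i) //= expr2 lerDl.
  by apply: sumr_ge0 => j _; rewrite -expr2 sqr_ge0.
by rewrite ler_norml; apply/andP; split; nra.
Qed.

Lemma grad_near_eq (f g : V3 -> R) x :
  (\forall y \near x, f y = g y) -> grad f x = grad g x.
Proof. by move=> fg; apply/rowP => k; rewrite !mxE; apply: near_eq_derive. Qed.

Lemma div_near_eq (v w : V3 -> V3) x :
  (\forall y \near x, v y = w y) -> div v x = div w x.
Proof.
move=> vw; apply: eq_bigr => i _; apply: near_eq_derive.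
by apply: filterS vw => y ->.
Qed.

Lemma grad_inv (f : V3 -> R) x : f x != 0 -> differentiable f x ->
  grad (fun y => (f y)^-1) x = - (f x) ^- 2 *: grad f x.
Proof.
by move=> fx0 df; apply/rowP => k; rewrite !mxE /partial deriveV //; apply: diff_derivable.
Qed.

Lemma divN (w : V3 -> V3) x : (forall i, differentiable (fun y => w y 0 i) x) ->
  div (fun y => - w y) x = - div w x.
Proof.
move=> dw; rewrite /div -sumrN; apply: eq_bigr => i _.
rewrite /partial (_ : (fun y => _) = - (fun y => w y 0 i)); last first.
  by apply/funext => y; rewrite !mxE.
by rewrite deriveN //; apply: diff_derivable.
Qed.

Lemma divZ (a : V3 -> R) (w : V3 -> V3) x :
  differentiable a x -> (forall i, differentiable (fun y => w y 0 i) x) ->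
  div (fun y => a y *: w y) x = a x * div w x + dot (grad a x) (w x).
Proof.
move=> da dw; rewrite /div dot_sum mulr_sumr -big_split; apply: eq_bigr => i _.
rewrite /partial (_ : (fun y => _) = a * (fun y => w y 0 i)); last first.
  by apply/funext => y; rewrite !mxE.
rewrite deriveM; try exact: diff_derivable.
by rewrite mxE; congr (_ + _); apply: mulrC.
Qed.

Lemma C1_onM U (f g : V3 -> R) : C1_on U f -> C1_on U g -> C1_on U (f * g).
Proof.
move=> [oU [df cf]] [_ [dg cg]]; split=> //; split.
  by move=> x Ux; apply: differentiableM; [apply: df | apply: dg].
move=> i; apply: (@subspace_eq_continuous _ _ _ (f * partial i g + g * partial i f)).
  move=> x; rewrite inE => Ux.
  change ((f * partial i g + g * partial i f) x = partial i (f * g) x).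
  by rewrite /partial deriveM //=; apply: diff_derivable; [apply: df | apply: dg].
have cont_diff h : (forall x, U x -> differentiable h x) -> {within U, continuous h}.
  move=> dh; apply: continuous_in_subspaceT => x; rewrite inE => Ux.
  exact/differentiable_continuous/dh.
apply: within_continuousD => x; apply: continuousM.
- exact: cont_diff.
- exact: cg.
- exact: cont_diff.
- exact: cf.
Qed.

Lemma C1_on_sum U n (h : 'I_n -> V3 -> R) : open U -> (forall k, C1_on U (h k)) ->
  C1_on U (fun y => \sum_(k < n) h k y).
Proof.
move=> oU C1h; rewrite -fct_sumE; split=> //; split.
  by move=> x Ux; apply: differentiable_sum => k; apply: (C1h k).2.1.
move=> i; apply: (@subspace_eq_continuous _ _ _ (\sum_(k < n) partial i (h k))).
  move=> x; rewrite inE => Ux.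
  change ((\sum_(k < n) partial i (h k)) x = partial i (\sum_(k < n) h k) x).
  rewrite /partial derive_sum ?fct_sumE //.
  by move=> k; apply/diff_derivable/(C1h k).2.1.
by apply: within_continuous_sum => k; apply: (C1h k).2.2.
Qed.

End vector_calculus.

Section heat_conduction.
Variable R : realType.
Notation V3 := 'rV[R]_3.
Variables (T : V3 -> R) (K : V3 -> 'M[R]_3).

Definition Kgrad (y : V3) : V3 := mapply (K y) (grad T y).

Lemma Kgrad_coord y i : Kgrad y 0 i = \sum_(k < 3) partial k T y * K y i k.
Proof. by rewrite /Kgrad /mapply /grad !mxE; apply: eq_bigr => k _; rewrite !mxE. Qed.

Lemma C1_on_Kgrad U i : open U ->
  (forall k, C1_on U (partial k T)) -> (forall k l, C1_on U (fun y => K y k l)) ->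
  C1_on U (fun y => Kgrad y 0 i).
Proof.
move=> oU C1dT C1K; rewrite (_ : (fun y => _) = fun y => \sum_(k < 3) partial k T y * K y i k).
  by apply: C1_on_sum => // k; apply: C1_onM.
by apply/funext => y; rewrite Kgrad_coord.
Qed.

Lemma differentiable_heat_flux x i : differentiable (fun y => Kgrad y 0 i) x ->
  differentiable (fun y => heat_flux T K y 0 i) x.
Proof.
move=> dw; rewrite (_ : (fun y => _) = - (fun y => Kgrad y 0 i)).
  exact: differentiableN.
by apply/funext => y; rewrite /heat_flux mxE.
Qed.

Lemma div_heat_flux x : (forall i, differentiable (fun y => Kgrad y 0 i) x) ->
  div (heat_flux T K) x = - div Kgrad x.
Proof. exact: divN. Qed.

Lemma scale_entropy_flux y : T y != 0 -> T y *: entropy_flux T K y = heat_flux T K y.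
Proof. by move=> Ty0; rewrite /entropy_flux mapplyZ scalerN scalerA mulfV ?scale1r. Qed.

Section entropy_effort.
Variables (rho : V3 -> R) (x : V3).
Hypotheses (rho_near_neq0 : \forall y \near x, rho y != 0) (Tx_neq0 : T x != 0).
Hypotheses (dT : differentiable T x) (dKgrad : forall i, differentiable (fun y => Kgrad y 0 i) x).

Let e_s y := rho y * T y.

Lemma entropy_rate_heat_flux :
  - (rho x * T x)^-1 * div (heat_flux T K) x = J_q rho T K e_s x.
Proof.
have grad_Te_s : \forall y \near x, grad (fun z => e_s z / rho z) y = grad T y.
  apply: filterS (nbhs_interior rho_near_neq0) => y rho_neq0_near_y.
  apply: grad_near_eq; apply: filterS rho_neq0_near_y => z rhoz0.
  by rewrite /e_s mulrAC mulfV ?mul1r.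
have flux_near : \forall y \near x,
    mapply (S_T T K y) (G_T rho e_s y) = (T y)^-1 *: heat_flux T K y.
  by apply: filterS grad_Te_s => y gradTy; rewrite /G_T gradTy /S_T mapplyZ mapplyN.
have rhox0 : rho x != 0 := nbhs_singleton rho_near_neq0.
have Kgrad_q : mapply (K x) (grad T x) = - heat_flux T K x by rewrite opprK.
rewrite /J_q /Q_T /G_T_adj (nbhs_singleton grad_Te_s).
rewrite (div_near_eq (w := fun y => (T y)^-1 *: heat_flux T K y) flux_near).
rewrite divZ; last 2 first.
- exact: differentiableV.
- by move=> i; apply: differentiable_heat_flux.
rewrite grad_inv // /S_T sqnormXZ Kgrad_q dotNl dotZl [dot (grad T x) _]dotC.
by field; apply/andP.
Qed.

Lemma entropy_production_density :
  e_s x * J_q rho T K e_s x = div Kgrad x.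
Proof.
rewrite -entropy_rate_heat_flux div_heat_flux // /e_s.
by field; apply/andP; split=> //; apply: nbhs_singleton rho_near_neq0.
Qed.

End entropy_effort.
End heat_conduction.

Unset Implicit Arguments.

Theorem lemma2 (R : realType) (Om : set 'rV[R]_3)
  (sigma : {measure set (R * R * R)%type -> \bar R}) (nu : 'rV[R]_3 -> 'rV[R]_3)
  (rho T : 'rV[R]_3 -> R) (K : 'rV[R]_3 -> 'M[R]_3) :
  open Om -> connected Om -> bounded_set Om ->
  measurable (to3 @^-1` Om) ->
  surface_data Om sigma nu ->
  (forall x, closure Om x -> 0 < rho x) ->
  (forall x, closure Om x -> 0 < T x) ->
  (forall x, closure Om x -> psd (K x)) ->
  (exists U, [/\ open U, closure Om `<=` U, C1_on U T,
      (forall i, C1_on U (partial i T)) &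
      (forall i j, C1_on U (fun y => K y i j))]) ->
  let e_s := fun x => rho x * T x in
  (forall x, Om x ->
     - (rho x * T x)^-1 * div (heat_flux T K) x = J_q rho T K e_s x) /\
  vol_int Om (fun x => e_s x * J_q rho T K e_s x) =
  (- \int[sigma]_(p in to3 @^-1` bdry Om)
       (T (to3 p) * dot (entropy_flux T K (to3 p)) (nu (to3 p)))%:E)%E.
Proof.
move=> oOm _ bOm _ [sigma_fin _ nu_unit gauss_green] rho_gt0 T_gt0 _
  [U [oU clOmU C1T C1dT C1K]] e_s.
have OmU : Om `<=` U := subset_trans (@subset_closure _ Om) clOmU.
have C1w i := C1_on_Kgrad i oU C1dT C1K.
have dw y i : U y -> differentiable (fun z => Kgrad T K z 0 i) y.
  by move=> Uy; apply: (C1w i).2.1.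
have T_neq0 x : closure Om x -> T x != 0 by move=> clx; rewrite gt_eqF // T_gt0.
have at_Om x : Om x -> [/\ \forall y \near x, rho y != 0, T x != 0,
    differentiable T x & forall i, differentiable (fun y => Kgrad T K y 0 i) x].
  move=> Omx; split; first 2 last.
  - exact: C1T.2.1 (OmU _ Omx).
  - by move=> i; apply: dw (OmU _ Omx).
  - apply: filterS (open_nbhs_nbhs (conj oOm Omx)) => y Omy.
    by rewrite gt_eqF // rho_gt0 //; apply: subset_closure.
  - by apply: T_neq0; apply: subset_closure.
split=> [x /at_Om[]|]; first exact: entropy_rate_heat_flux.
have [M wM] : exists M, forall y, closure Om y -> \sum_(i < 3) `|Kgrad T K y 0 i| <= M.
  apply: compact_bounded_components => [|i].
    exact: bounded_closed_compact (bounded_set_closure bOm) (@closed_closure _ Om).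
  apply: continuous_in_subspaceT => y; rewrite inE => /clOmU Uy.
  exact/differentiable_continuous/dw.
transitivity (vol_int Om (div (Kgrad T K))).
  apply: eq_integral => p; rewrite inE /= => /at_Om[*].
  by congr EFin; apply: entropy_production_density.
rewrite gauss_green; last by exists U; split=> // i; apply: C1w.
rewrite [in RHS](eq_integral (fun p => (- dot (Kgrad T K (to3 p)) (nu (to3 p)))%:E)).
  rewrite (integral_oppr_bounded (M := M) sigma_fin) ?oppeK // => p bdp.
  exact: le_trans (abs_dot_unit_le _ (nu_unit _ bdp)) (wM _ bdp.1).
move=> p; rewrite inE => -[clp _].
by rewrite -dotZl scale_entropy_flux ?T_neq0 // dotNl.
Qed.
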